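(* Let $H$ be a reduced double-well type potential and $\gamma$ its Puiseux exponent. Then, as $\beta\to+\infty$, \begin{enumerate} \item $-\frac1\beta\ln(\lambda_\beta-1)\to\gamma$; \item for $i=0,1$, $-\frac1\beta\ln F_\beta^i(\lambda_\beta)\to\min\{H_{min}^i,\ H_\infty^i-\gamma\}$; \item for $i=0,1$, $-\frac1\beta\ln\tilde F_\beta^i(\lambda_\beta)\to\min\{H_{min}^i,\ H_\infty^i-2\gamma\}$. \end{enumerate}
   Context: $\Sigma:=\{0,1\}^{\mathbb N}$. A reduced double-well type potential is a continuous nonnegative $H:\Sigma\to\mathbb R$ with summable variation such that $H=0$ on $[00]\cup[11]$, $H=H_n^0>0$ on $[01^n0]$, $H=H_n^1>0$ on $[10^n1]$ ($n\ge1$), and $\sum_{k\ge1}\sup_{n\ge0}|H_k^i-H_{k+n}^i|<\infty$ ($i=0,1$). $H_\infty^i:=\lim_nH_n^i$, $H_{min}^i:=\inf_{n\ge1}H_n^i$. Puiseux exponent: $\gamma:=\min\{\tfrac12(H_\infty^1+H_\infty^0),\ H_{min}^0+H_\infty^1,\ H_{min}^1+H_\infty^0\}$. $\lambda_\beta$ is the eigenvalue of the unique positive continuous eigenfunction of $\mathcal L_\beta[\Phi](x)=e^{-\beta H(0x)}\Phi(0x)+e^{-\beta H(1x)}\Phi(1x)$ (one has $\lambda_\beta>1$). $F_\beta^i(\lambda):=\sum_{k\ge1}\lambda^{-k}e^{-\beta H_k^i}$, $\tilde F_\beta^i(\lambda):=\sum_{k\ge1}k\lambda^{-k}e^{-\beta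 H_k^i}$. *)

From Stdlib Require Import Reals Lra ClassicalEpsilon.
Open Scope R_scope.

(** The full shift Sigma = {0,1}^N, with 0 = false, 1 = true. *)
Definition Sigma := nat -> bool.

Definition cons_sym (a : bool) (x : Sigma) : Sigma :=
  fun i => match i with O => a | S j => x j end.

Definition agree (n : nat) (x y : Sigma) : Prop :=
  forall i, (i <= n)%nat -> x i = y i.

Definition continuous_Sigma (f : Sigma -> R) : Prop :=
  forall x eps, 0 < eps -> exists n, forall y, agree n x y -> Rabs (f x - f y) < eps.

(** Sum of a series (classically chosen; 0 if it does not converge). *)
Definition series (f : nat -> R) : R :=
  match excluded_middle_informative (exists l, infinite_sum f l) with
  | left h => proj1_sig (constructive_indefinite_description _ h)
  | right _ => 0
  end.

(** Summable variation: var_{n+1}(H) := sup{|H x - H y| : x,y agree on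
    x_0..x_n} is summable; equivalently, it is dominated by a summable
    sequence. *)
Definition summable_variation (H : Sigma -> R) : Prop :=
  exists v : nat -> R,
    (forall n x y, agree n x y -> Rabs (H x - H y) <= v n) /\
    (exists l, infinite_sum v l).

(** Reduced double-well type potential, with H0 n = H_n^0 and H1 n = H_n^1
    (values at n = 0 are irrelevant). *)
Definition reduced_double_well (H : Sigma -> R) (H0 H1 : nat -> R) : Prop :=
  continuous_Sigma H /\
  (forall x, 0 <= H x) /\
  summable_variation H /\
  (forall x, x 0%nat = x 1%nat -> H x = 0) /\
  (forall n, (1 <= n)%nat -> 0 < H0 n /\
     forall x, x 0%nat = false -> (forall i, (1 <= i <= n)%nat -> x i = true) ->
               x (S n) = false -> H x = H0 n) /\
  (forall n, (1 <= n)%nat -> 0 < H1 n /\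
     forall x, x 0%nat = true -> (forall i, (1 <= i <= n)%nat -> x i = false) ->
               x (S n) = true -> H x = H1 n) /\
  (exists w : nat -> R,
     (forall k n, (1 <= k)%nat -> Rabs (H0 k - H0 (k + n)%nat) <= w k) /\
     (exists l, infinite_sum w l)) /\
  (exists w : nat -> R,
     (forall k n, (1 <= k)%nat -> Rabs (H1 k - H1 (k + n)%nat) <= w k) /\
     (exists l, infinite_sum w l)).

Definition is_inf_from1 (u : nat -> R) (m : R) : Prop :=
  (forall n, (1 <= n)%nat -> m <= u n) /\
  (forall m', (forall n, (1 <= n)%nat -> m' <= u n) -> m' <= m).

Definition puiseux_gamma (Hinf0 Hinf1 Hmin0 Hmin1 : R) : R :=
  Rmin (Rmin ((Hinf1 + Hinf0) / 2) (Hmin0 + Hinf1)) (Hmin1 + Hinf0).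

Definition transfer (H : Sigma -> R) (beta : R) (Phi : Sigma -> R) (x : Sigma) : R :=
  exp (- beta * H (cons_sym false x)) * Phi (cons_sym false x)
  + exp (- beta * H (cons_sym true x)) * Phi (cons_sym true x).

Definition is_pos_cont_eigenvalue (H : Sigma -> R) (beta lam : R) : Prop :=
  exists Phi : Sigma -> R,
    continuous_Sigma Phi /\ (forall x, 0 < Phi x) /\
    (forall x, transfer H beta Phi x = lam * Phi x).

Definition Fbeta (Hi : nat -> R) (beta lam : R) : R :=
  series (fun n => / lam ^ (S n) * exp (- beta * Hi (S n))).

Definition Ftilde (Hi : nat -> R) (beta lam : R) : R :=
  series (fun n => INR (S n) * / lam ^ (S n) * exp (- beta * Hi (S n))).

Definition cv_at_infty (g : R -> R) (L : R) : Prop :=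
  forall eps, 0 < eps -> exists B, forall beta, B < beta -> Rabs (g beta - L) < eps.

From Stdlib Require Import Reals Lra Lia Classical ClassicalEpsilon FunctionalExtensionality.
Open Scope R_scope.

(* Iterating the eigen equation [L Phi = lam Phi] along the maximal runs of equal symbols
   expresses Phi on the cylinder [10] through its values on [01], weighted by the terms of
   F^0, and back; since a positive continuous Phi on the compact shift is bounded above and
   away from 0, comparing sup and inf of Phi on [10] gives the renewal identity
   F^0(lam) F^1(lam) = 1.  As H^i_k is close to H^i_inf beyond a fixed index, F^i(lam) is
   comparable, up to factors e^(o(beta)), to e^(-beta H^i_min) + e^(-beta H^i_inf) / (lam - 1),
   and F~^i(lam) to the same expression with 1 / (lam - 1)^2.  Inserting these bounds into
   the renewal identity pins down lam - 1 = e^(-beta gamma + o(beta)), from which the rates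
   of F^i and F~^i follow. *)

(** * Series *)

Lemma series_eq a l : infinite_sum a l -> series a = l.
Proof.
  intros Hl. unfold series. destruct (excluded_middle_informative _) as [h|h].
  - destruct (constructive_indefinite_description _ h) as [l' Hl']. simpl.
    eapply uniqueness_sum; eauto.
  - exfalso; apply h; eauto.
Qed.

Lemma cv_const c : Un_cv (fun _ => c) c.
Proof. intros eps Heps. exists 0%nat. intros n _. rewrite Rdist_eq. exact Heps. Qed.

Lemma infinite_sum_ext a b l : (forall n, a n = b n) -> infinite_sum a l -> infinite_sum b l.
Proof. intros Hab. replace b with a by (apply functional_extensionality; exact Hab). auto. Qed.

Lemma infinite_sum_le a b la lb :
  (forall n, a n <= b n) -> infinite_sum a la -> infinite_sum b lb -> la <= lb.
Proof.
  intros Hab Ha Hb. eapply Rle_cv_lim; [|exact Ha|exact Hb].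
  intros n. apply sum_Rle. auto.
Qed.

Lemma infinite_sum_scal a l c : infinite_sum a l -> infinite_sum (fun n => a n * c) (l * c).
Proof.
  intros Ha. apply (Un_cv_ext (fun N => sum_f_R0 a N * c)).
  - intros N. rewrite <- scal_sum. ring.
  - exact (CV_mult _ _ _ _ Ha (cv_const c)).
Qed.

Lemma partial_sum_le a l N : (forall n, 0 <= a n) -> infinite_sum a l -> sum_f_R0 a N <= l.
Proof.
  intros Ha Hl. apply (growing_ineq (sum_f_R0 a)); auto.
  intros n. simpl. generalize (Ha (S n)). lra.
Qed.

Lemma sum_le_of_partial_le a l B : infinite_sum a l -> (forall N, sum_f_R0 a N <= B) -> l <= B.
Proof. intros Hl HB. exact (Rle_cv_lim HB Hl (cv_const B)). Qed.

Lemma summable_of_bounded a B :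
  (forall n, 0 <= a n) -> (forall N, sum_f_R0 a N <= B) ->
  infinite_sum a (series a) /\ series a <= B.
Proof.
  intros Ha HB. destruct (growing_cv (sum_f_R0 a)) as [l Hl].
  - intros n. simpl. generalize (Ha (S n)). lra.
  - exists B. intros x [N ->]. auto.
  - rewrite (series_eq a l Hl). split; auto. eapply sum_le_of_partial_le; eauto.
Qed.

Lemma summable_of_le a b lb :
  (forall n, 0 <= a n <= b n) -> infinite_sum b lb ->
  infinite_sum a (series a) /\ series a <= lb.
Proof.
  intros Hab Hb. apply summable_of_bounded; [intros n; apply Hab|].
  intros N. apply Rle_trans with (sum_f_R0 b N).
  - apply sum_Rle. intros n _. apply Hab.
  - apply partial_sum_le; auto. intros n. generalize (Hab n). lra.
Qed.

Lemma sum_shift_le a K N :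
  (forall n, 0 <= a n) -> sum_f_R0 (fun n => a (n + K)%nat) N <= sum_f_R0 a (N + K).
Proof.
  intros Ha. induction N as [|N IH]; simpl.
  - destruct K as [|K]; simpl; [lra|].
    generalize (cond_pos_sum a K Ha). lra.
  - generalize (Ha (S (N + K))). lra.
Qed.

Lemma term_le_series a l n : (forall k, 0 <= a k) -> infinite_sum a l -> a n <= l.
Proof.
  intros Ha Hl. apply Rle_trans with (sum_f_R0 (fun k => a (k + n)%nat) 0).
  - simpl. lra.
  - eapply Rle_trans; [apply sum_shift_le; auto|]. apply partial_sum_le; auto.
Qed.

Lemma infinite_sum_nonneg a l : (forall n, 0 <= a n) -> infinite_sum a l -> 0 <= l.
Proof. intros Ha Hl. apply Rle_trans with (a 0%nat); [apply Ha|apply term_le_series; auto]. Qed.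

Lemma series_terms_cv_0 a l : infinite_sum a l -> Un_cv a 0.
Proof.
  intros Ha. apply (CV_shift _ 1).
  apply (Un_cv_ext (fun N => sum_f_R0 a (S N) - sum_f_R0 a N)).
  - intros N. rewrite Nat.add_1_r. simpl. ring.
  - replace 0 with (l - l) by ring. apply CV_minus; auto.
    intros eps Heps. destruct (Ha eps Heps) as [N HN]. exists N. intros n Hn. apply HN. lia.
Qed.

Lemma geometric_series lam : 1 < lam -> infinite_sum (fun n => / lam ^ S n) (/ (lam - 1)).
Proof.
  intros Hlam.
  assert (Hx : Rabs (/ lam) < 1).
  { rewrite Rabs_pos_eq by (left; apply Rinv_0_lt_compat; lra).
    rewrite <- Rinv_1. apply Rinv_lt_contravar; lra. }
  replace (/ (lam - 1)) with (/ (1 - / lam) * / lam) by (field; lra).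
  apply (infinite_sum_ext (fun n => 1 * (/ lam) ^ n * / lam)).
  - intros n. rewrite <- pow_inv. simpl. ring.
  - exact (infinite_sum_scal _ _ _ (GP_infinite _ Hx)).
Qed.

(* The exact value comes from [(1 - x) * sum_{k <= N} k x^k = sum_{k <= N} x^k - N x^(N+1)]
   together with the vanishing of the terms of a convergent series. *)
Lemma weighted_geometric_series lam :
  1 < lam -> infinite_sum (fun n => INR (S n) * / lam ^ S n) (lam / ((lam - 1) * (lam - 1))).
Proof.
  intros Hlam. set (x := / lam).
  assert (Hx : 0 < x < 1).
  { unfold x. split; [apply Rinv_0_lt_compat; lra|]. rewrite <- Rinv_1. apply Rinv_lt_contravar; lra. }
  set (t := fun n => INR (S n) * x ^ S n).
  assert (Ht : forall n, INR (S n) * / lam ^ S n = t n) by (intros n; unfold t, x; rewrite pow_inv; reflexivity).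
  apply (infinite_sum_ext t); [intros n; symmetry; apply Ht|].
  assert (Hgeo : infinite_sum (fun n => x ^ S n) (x / (1 - x))).
  { replace (x / (1 - x)) with (/ (lam - 1)) by (unfold x; field; lra).
    apply (infinite_sum_ext (fun n => / lam ^ S n)); [intros n; unfold x; symmetry; apply pow_inv|].
    apply geometric_series; auto. }
  assert (Hid : forall N, sum_f_R0 t N * (1 - x) = sum_f_R0 (fun n => x ^ S n) N - INR (S N) * x ^ S (S N)).
  { induction N as [|N IH]; simpl sum_f_R0.
    - unfold t. simpl. ring.
    - rewrite Rmult_plus_distr_r, IH. unfold t. rewrite !S_INR. simpl. ring. }
  assert (Ht0 : forall n, 0 <= t n).
  { intros n. unfold t. apply Rmult_le_pos; [apply pos_INR|apply pow_le; lra]. }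
  destruct (summable_of_bounded t (x / (1 - x) / (1 - x)) Ht0) as [HS _].
  { intros N. apply (Rmult_le_reg_r (1 - x)); [lra|].
    replace (x / (1 - x) / (1 - x) * (1 - x)) with (x / (1 - x)) by (field; lra).
    rewrite Hid. generalize (partial_sum_le _ _ N (fun n => pow_le x (S n) ltac:(lra)) Hgeo).
    assert (0 <= INR (S N) * x ^ S (S N)) by (apply Rmult_le_pos; [apply pos_INR|apply pow_le; lra]).
    lra. }
  assert (Hrem : Un_cv (fun N => INR (S N) * x ^ S (S N)) 0).
  { apply (Un_cv_ext (fun N => t N * x)); [intros N; unfold t; simpl; ring|].
    replace 0 with (0 * x) by ring. exact (CV_mult _ _ _ _ (series_terms_cv_0 _ _ HS) (cv_const x)). }
  assert (Hlim : series t * (1 - x) = x / (1 - x) - 0).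
  { apply (UL_sequence (fun N => sum_f_R0 t N * (1 - x))).
    - exact (CV_mult _ _ _ _ HS (cv_const (1 - x))).
    - apply (Un_cv_ext (fun N => sum_f_R0 (fun n => x ^ S n) N - INR (S N) * x ^ S (S N))).
      + intros N. symmetry. apply Hid.
      + apply CV_minus; auto. }
  replace (lam / ((lam - 1) * (lam - 1))) with (series t); [exact HS|].
  apply (Rmult_eq_reg_r (1 - x)); [|lra]. rewrite Hlim. unfold x. field. lra.
Qed.

(** * Compactness of the shift *)

Definition extend_prefix (f : Sigma) (n : nat) (b : bool) : Sigma :=
  fun i => if Nat.ltb i n then f i else b.

Section Koenig.
Variable Bad : Sigma -> nat -> Prop.
Hypothesis Bad_prefix : forall f g n, (forall i, (i < n)%nat -> f i = g i) -> Bad f n -> Bad g n.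
Hypothesis Bad_split : forall f n, Bad f n -> Bad (extend_prefix f n false) (S n) \/ Bad (extend_prefix f n true) (S n).

Fixpoint bad_path (n : nat) : Sigma :=
  match n with
  | O => fun _ => false
  | S m => extend_prefix (bad_path m) m
      (if excluded_middle_informative (Bad (extend_prefix (bad_path m) m false) (S m))
       then false else true)
  end.

Lemma bad_path_bad : Bad (bad_path 0) 0 -> forall n, Bad (bad_path n) n.
Proof.
  intros H0 n; induction n as [|n IH]; auto.
  simpl. destruct (excluded_middle_informative _) as [h|h]; auto.
  destruct (Bad_split _ _ IH); tauto.
Qed.

Lemma bad_path_stable n i : (i < n)%nat -> bad_path n i = bad_path (S i) i.
Proof.
  induction n as [|n IH]; intros Hi; [lia|].
  destruct (Nat.eq_dec i n) as [->|Hne]; [reflexivity|].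
  simpl bad_path at 1. unfold extend_prefix at 1.
  replace (Nat.ltb i n) with true by (symmetry; apply Nat.ltb_lt; lia).
  apply IH; lia.
Qed.

Lemma koenig : Bad (bad_path 0) 0 -> exists p, forall n, Bad p n.
Proof.
  intros H0. exists (fun i => bad_path (S i) i). intros n.
  apply (Bad_prefix (bad_path n)); [|apply bad_path_bad; auto].
  intros i Hi. apply bad_path_stable; auto.
Qed.
End Koenig.

(* Koenig's lemma on the prefixes on which [f] is unbounded above yields a point
   at which [f] cannot be continuous. *)
Lemma continuous_bounded_above (f : Sigma -> R) :
  continuous_Sigma f -> exists M, forall x, f x <= M.
Proof.
  intros Hc. apply NNPP; intros Hno.
  set (Bad := fun g n => forall M, exists x, (forall i, (i < n)%nat -> x i = g i) /\ M < f x).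
  destruct (koenig Bad) as [p Hp].
  - intros g h n Hgh Hg M. destruct (Hg M) as [x [Hx1 Hx2]]. exists x; split; auto.
    intros i Hi. rewrite Hx1; auto.
  - intros g n Hg. apply NNPP; intros Hn. apply not_or_and in Hn as [H1 H2].
    apply not_all_ex_not in H1 as [M1 H1]. apply not_all_ex_not in H2 as [M2 H2].
    destruct (Hg (Rmax M1 M2)) as [x [Hx1 Hx2]].
    assert (Hext : forall i, (i < S n)%nat -> x i = extend_prefix g n (x n) i).
    { intros i Hi. unfold extend_prefix. destruct (Nat.ltb_spec i n); [auto|].
      replace i with n by lia. reflexivity. }
    destruct (x n) eqn:E.
    + apply H2. exists x. split; auto. generalize (Rmax_r M1 M2); lra.
    + apply H1. exists x. split; auto. generalize (Rmax_l M1 M2); lra.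
  - intros M. apply NNPP; intros Hn. apply Hno. exists M. intros x.
    apply Rnot_lt_le. intros Hlt. apply Hn. exists x. split; auto. intros i Hi; lia.
  - destruct (Hc p 1 Rlt_0_1) as [n Hn].
    destruct (Hp (S n) (f p + 1)) as [x [Hx1 Hx2]].
    assert (Ha : agree n p x) by (intros i Hi; symmetry; apply Hx1; lia).
    specialize (Hn x Ha). apply Rabs_def2 in Hn. lra.
Qed.

Lemma continuous_Sigma_inv (f : Sigma -> R) :
  continuous_Sigma f -> (forall x, 0 < f x) -> continuous_Sigma (fun x => / f x).
Proof.
  intros Hc Hpos x eps Heps. set (a := f x). assert (Ha : 0 < a) by apply Hpos.
  destruct (Hc x (Rmin (a / 2) (eps * a * a / 2))) as [n Hn].
  { apply Rmin_pos; [lra|]. apply Rdiv_lt_0_compat; [|lra].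
    repeat apply Rmult_lt_0_compat; auto. }
  exists n. intros y Hy. specialize (Hn y Hy). fold a in Hn.
  generalize (Rmin_l (a / 2) (eps * a * a / 2)) (Rmin_r (a / 2) (eps * a * a / 2)).
  intros Hm1 Hm2. apply Rabs_def2 in Hn as [Hn1 Hn2].
  assert (Hu : a / 2 < f y) by lra.
  replace (/ a - / f y) with ((f y - a) / (a * f y)) by (field; lra).
  assert (Hau : 0 < a * f y) by nra.
  assert (Hcancel : forall z, z / (a * f y) * (a * f y) = z) by (intros z; field; lra).
  apply Rabs_def1; apply (Rmult_lt_reg_r (a * f y)); auto;
    [rewrite Hcancel|rewrite Ropp_mult_distr_l_reverse, Hcancel]; nra.
Qed.

Lemma continuous_pos_bounded_below (f : Sigma -> R) :
  continuous_Sigma f -> (forall x, 0 < f x) -> exists m, 0 < m /\ forall x, m <= f x.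
Proof.
  intros Hc Hpos. destruct (continuous_bounded_above _ (continuous_Sigma_inv f Hc Hpos)) as [M HM].
  assert (HM0 : 0 < M).
  { eapply Rlt_le_trans; [|apply (HM (fun _ => false))]. apply Rinv_0_lt_compat, Hpos. }
  exists (/ M). split; [apply Rinv_0_lt_compat; auto|]. intros x.
  rewrite <- (Rinv_inv (f x)). apply Rinv_le_contravar; [apply Rinv_0_lt_compat, Hpos|apply HM].
Qed.

(** * Exponential rates *)

Lemma exp_le_mono x y : x <= y -> exp x <= exp y.
Proof. intros [Hlt| ->]; [left; apply exp_increasing; auto|lra]. Qed.

Lemma ln_le_mono x y : 0 < x -> x <= y -> ln x <= ln y.
Proof. intros Hx [Hlt| ->]; [left; apply ln_increasing; auto|lra]. Qed.

Lemma exp_scale_le beta a b : 0 <= beta -> a <= b -> exp (- beta * b) <= exp (- beta * a).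
Proof.
  intros Hb Hab. apply exp_le_mono.
  replace (- beta * b) with (- (beta * b)) by ring. replace (- beta * a) with (- (beta * a)) by ring.
  apply Ropp_le_contravar, Rmult_le_compat_l; auto.
Qed.

Lemma exp_scale_plus beta a b : exp (- beta * a) * exp (- beta * b) = exp (- beta * (a + b)).
Proof. rewrite <- exp_plus. f_equal. ring. Qed.

Lemma exp_scale_mult c1 c2 beta a b :
  c1 * exp (- beta * a) * (c2 * exp (- beta * b)) = c1 * c2 * exp (- beta * (a + b)).
Proof. rewrite <- exp_scale_plus. ring. Qed.

Lemma exp_decay_eventually c s :
  0 < s -> exists B, forall beta, B < beta -> c * exp (- beta * s) <= / 2.
Proof.
  intros Hs. exists (ln (2 * Rabs c + 1) / s). intros beta Hb.
  assert (Hc := Rabs_pos c). assert (Hc' := Rle_abs c).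
  assert (Hbs : ln (2 * Rabs c + 1) < beta * s).
  { apply (Rmult_lt_compat_r s) in Hb; auto.
    replace (ln (2 * Rabs c + 1) / s * s) with (ln (2 * Rabs c + 1)) in Hb by (field; lra). lra. }
  apply exp_increasing in Hbs. rewrite exp_ln in Hbs by lra.
  replace (- beta * s) with (- (beta * s)) by ring. rewrite exp_Ropp.
  set (E := exp (beta * s)) in *. assert (HE : 0 < E) by apply exp_pos.
  apply (Rmult_le_reg_r E); auto. rewrite Rmult_assoc, Rinv_l by lra. lra.
Qed.

Definition exp_rate (X : R -> R) (L : R) : Prop :=
  forall e, 0 < e -> exists c C B, 0 < c /\ 0 < C /\
    forall beta, B < beta -> c * exp (- beta * (L + e)) <= X beta <= C * exp (- beta * (L - e)).

Lemma exp_rate_cv X L : exp_rate X L -> cv_at_infty (fun beta => - / beta * ln (X beta)) L.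
Proof.
  intros Hr eps Heps. destruct (Hr (eps / 2)) as [c [C [B [Hc [HC HB]]]]]; [lra|].
  set (K := Rabs (ln c) + Rabs (ln C)).
  exists (Rmax B (Rmax 0 (2 * K / eps))). intros beta Hbeta.
  generalize (Rmax_l B (Rmax 0 (2 * K / eps))) (Rmax_r B (Rmax 0 (2 * K / eps)))
    (Rmax_l 0 (2 * K / eps)) (Rmax_r 0 (2 * K / eps)). intros Hm1 Hm2 Hm3 Hm4.
  assert (Hb : 0 < beta) by lra.
  assert (HK : K < eps * beta / 2).
  { apply (Rmult_lt_reg_r (2 / eps)); [apply Rdiv_lt_0_compat; lra|].
    replace (eps * beta / 2 * (2 / eps)) with beta by (field; lra).
    replace (K * (2 / eps)) with (2 * K / eps) by (field; lra). lra. }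
  destruct (HB beta ltac:(lra)) as [Hlo Hup].
  assert (Hlo0 : 0 < c * exp (- beta * (L + eps / 2))) by (apply Rmult_lt_0_compat; auto; apply exp_pos).
  assert (HX0 : 0 < X beta) by lra.
  apply ln_le_mono in Hlo; auto. apply ln_le_mono in Hup; auto.
  rewrite ln_mult, ln_exp in Hlo, Hup by (auto; apply exp_pos).
  set (u := ln (X beta)) in *.
  replace (- / beta * u - L) with (- (u + beta * L) * / beta) by (field; lra).
  rewrite Rabs_mult, Rabs_Ropp, (Rabs_pos_eq (/ beta)) by (left; apply Rinv_0_lt_compat; lra).
  apply (Rmult_lt_reg_r beta); auto. rewrite Rmult_assoc, Rinv_l, Rmult_1_r by lra.
  generalize (Rle_abs (ln C)) (Rle_abs (- ln c)). rewrite Rabs_Ropp. intros HC1 Hc1.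
  replace (- beta * (L + eps / 2)) with (- (beta * L) - eps * beta / 2) in Hlo by field.
  replace (- beta * (L - eps / 2)) with (- (beta * L) + eps * beta / 2) in Hup by field.
  unfold K in HK. set (h := eps * beta / 2) in *. assert (Hh : eps * beta = 2 * h) by (unfold h; field). rewrite Hh. generalize (Rabs_pos (ln c)) (Rabs_pos (ln C)). intros. apply Rabs_def1; lra.
Qed.

Lemma exp_rate_ext X Y L : (forall beta, X beta = Y beta) -> exp_rate X L -> exp_rate Y L.
Proof. intros HXY. replace Y with X by (apply functional_extensionality; exact HXY). auto. Qed.

Lemma exp_rate_inv X L : exp_rate X L -> exp_rate (fun beta => / X beta) (- L).
Proof.
  intros Hr e He. destruct (Hr e He) as [c [C [B [Hc [HC HB]]]]].
  exists (/ C), (/ c), B. split; [apply Rinv_0_lt_compat; auto|]. split; [apply Rinv_0_lt_compat; auto|].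
  intros beta Hbeta. destruct (HB beta Hbeta) as [Hlo Hup].
  assert (Hlo0 : 0 < c * exp (- beta * (L + e))) by (apply Rmult_lt_0_compat; auto; apply exp_pos).
  assert (Hflip : forall a k, / k * exp (- beta * (- L + a)) = / (k * exp (- beta * (L - a)))).
  { intros a k. rewrite Rinv_mult, <- exp_Ropp. f_equal. f_equal. ring. }
  rewrite Hflip. replace (- L - e) with (- L + - e) by ring. rewrite Hflip.
  replace (L - - e) with (L + e) by ring.
  split; apply Rinv_le_contravar; lra.
Qed.

Lemma exp_rate_mult X Y L M :
  exp_rate X L -> exp_rate Y M -> exp_rate (fun beta => X beta * Y beta) (L + M).
Proof.
  intros HX HY e He.
  destruct (HX (e / 2)) as [c1 [C1 [B1 [Hc1 [HC1 HB1]]]]]; [lra|].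
  destruct (HY (e / 2)) as [c2 [C2 [B2 [Hc2 [HC2 HB2]]]]]; [lra|].
  exists (c1 * c2), (C1 * C2), (Rmax B1 B2).
  split; [apply Rmult_lt_0_compat; auto|]. split; [apply Rmult_lt_0_compat; auto|].
  intros beta Hbeta. generalize (Rmax_l B1 B2) (Rmax_r B1 B2). intros Hm1 Hm2.
  destruct (HB1 beta ltac:(lra)) as [Hlo1 Hup1]. destruct (HB2 beta ltac:(lra)) as [Hlo2 Hup2].
  assert (0 <= c1 * exp (- beta * (L + e / 2))) by (left; apply Rmult_lt_0_compat; auto; apply exp_pos).
  assert (0 <= c2 * exp (- beta * (M + e / 2))) by (left; apply Rmult_lt_0_compat; auto; apply exp_pos).
  replace (L + M + e) with ((L + e / 2) + (M + e / 2)) by field.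
  replace (L + M - e) with ((L - e / 2) + (M - e / 2)) by field.
  rewrite <- !exp_scale_mult.
  split; apply Rmult_le_compat; lra.
Qed.

Lemma exp_rate_bounded X c C : 0 < c -> (forall beta, 0 < beta -> c <= X beta <= C) -> exp_rate X 0.
Proof.
  intros Hc HX e He. exists c, C, 0.
  assert (HcC : c <= C) by (generalize (HX 1 Rlt_0_1); lra).
  split; auto. split; [lra|]. intros beta Hb. destruct (HX beta Hb) as [Hlo Hup].
  assert (exp (- beta * (0 + e)) <= 1).
  { rewrite <- exp_0. apply exp_le_mono. rewrite Rplus_0_l. nra. }
  assert (1 <= exp (- beta * (0 - e))).
  { rewrite <- exp_0. apply exp_le_mono. rewrite Rminus_0_l. nra. }
  split; nra.
Qed.

Definition two_scale_bounds (X Y : R -> R) (Hmin Hinf : R) : Prop :=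
  forall e, 0 < e -> exists K ca cb, 0 <= K /\ 0 < ca /\ 0 < cb /\ forall beta, 0 < beta ->
    X beta <= K * exp (- beta * Hmin) + exp (- beta * (Hinf - e)) * Y beta /\
    ca * exp (- beta * (Hmin + e)) <= X beta /\
    cb * exp (- beta * (Hinf + e)) * Y beta <= X beta.

Lemma exp_rate_sandwich X Y Hmin Hinf g :
  exp_rate Y (- g) -> two_scale_bounds X Y Hmin Hinf -> exp_rate X (Rmin Hmin (Hinf - g)).
Proof.
  intros HY HX eps Heps. set (e := eps / 2).
  destruct (HX e) as [K [ca [cb [HK [Hca [Hcb HXb]]]]]]; [unfold e; lra|].
  destruct (HY e) as [c [C [B [Hc [HC HYb]]]]]; [unfold e; lra|].
  set (L := Rmin Hmin (Hinf - g)).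
  assert (HL1 : L <= Hmin) by apply Rmin_l. assert (HL2 : L <= Hinf - g) by apply Rmin_r.
  set (cmin := Rmin ca (cb * c)).
  assert (Hcmin : 0 < cmin) by (apply Rmin_pos; auto; apply Rmult_lt_0_compat; auto).
  exists cmin, (K + C), (Rmax B 0). split; auto. split; [lra|].
  intros beta Hbeta. generalize (Rmax_l B 0) (Rmax_r B 0). intros Hm1 Hm2.
  assert (Hb : 0 <= beta) by lra.
  destruct (HXb beta ltac:(lra)) as [Xu [Xla Xlb]]. destruct (HYb beta ltac:(lra)) as [Yl Yu].
  split.
  - destruct (Rle_dec Hmin (Hinf - g)) as [Hle|Hgt].
    + eapply Rle_trans; [|exact Xla].
      apply Rmult_le_compat; [lra|left; apply exp_pos|apply Rmin_l|].
      apply exp_scale_le; auto. unfold L. rewrite Rmin_left by auto. unfold e. lra.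
    + eapply Rle_trans; [|exact Xlb].
      apply Rle_trans with (cb * exp (- beta * (Hinf + e)) * (c * exp (- beta * (- g + e)))).
      * rewrite exp_scale_mult. apply Rmult_le_compat; [lra|left; apply exp_pos|apply Rmin_r|].
        apply exp_scale_le; auto. unfold L. rewrite Rmin_right by lra. unfold e. lra.
      * apply Rmult_le_compat_l; [|lra]. left; apply Rmult_lt_0_compat; auto; apply exp_pos.
  - eapply Rle_trans; [exact Xu|].
    assert (Htail : exp (- beta * (Hinf - e)) * Y beta <= C * exp (- beta * (L - eps))).
    { apply Rle_trans with (1 * exp (- beta * (Hinf - e)) * (C * exp (- beta * (- g - e)))).
      - rewrite Rmult_1_l. apply Rmult_le_compat_l; [left; apply exp_pos|lra].
      - rewrite exp_scale_mult, Rmult_1_l. apply Rmult_le_compat_l; [lra|].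
        apply exp_scale_le; auto. unfold e. lra. }
    assert (K * exp (- beta * Hmin) <= K * exp (- beta * (L - eps))).
    { apply Rmult_le_compat_l; auto. apply exp_scale_le; auto. lra. }
    lra.
Qed.

(** * The renewal identity *)

Lemma Fbeta_sum Hc beta lam :
  1 < lam -> (forall n, 0 <= beta * Hc (S n)) ->
  infinite_sum (fun n => / lam ^ S n * exp (- beta * Hc (S n))) (Fbeta Hc beta lam) /\
  0 <= Fbeta Hc beta lam <= / (lam - 1).
Proof.
  intros Hlam Hb.
  assert (Hterm : forall n, 0 <= / lam ^ S n * exp (- beta * Hc (S n)) <= / lam ^ S n).
  { intros n. assert (0 < / lam ^ S n) by (apply Rinv_0_lt_compat, pow_lt; lra).
    assert (exp (- beta * Hc (S n)) <= 1).
    { rewrite <- exp_0. apply exp_le_mono. generalize (Hb n). nra. }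
    generalize (exp_pos (- beta * Hc (S n))). split; nra. }
  destruct (summable_of_le _ _ _ Hterm (geometric_series lam Hlam)) as [Hsum Hle].
  repeat split; auto. apply (infinite_sum_nonneg _ _ (fun n => proj1 (Hterm n)) Hsum).
Qed.

Lemma infinite_sum_of_geometric_remainder u X x M :
  0 <= x < 1 -> (forall J, Rabs (X - sum_f_R0 u J) <= x ^ S J * M) -> infinite_sum u X.
Proof.
  intros Hx Hrem eps Heps.
  assert (HM : 0 < Rabs M + 1) by (generalize (Rabs_pos M); lra).
  destruct (pow_lt_1_zero x ltac:(rewrite Rabs_pos_eq; lra) (eps / (Rabs M + 1)))
    as [N HN]; [apply Rdiv_lt_0_compat; lra|].
  exists N. intros n Hn. unfold Rdist. rewrite Rabs_minus_sym.
  specialize (HN (S n) ltac:(lia)). rewrite Rabs_pos_eq in HN by (apply pow_le; lra).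
  apply Rmult_lt_compat_r with (r := Rabs M + 1) in HN; auto.
  replace (eps / (Rabs M + 1) * (Rabs M + 1)) with eps in HN by (field; lra).
  assert (x ^ S n * M <= x ^ S n * (Rabs M + 1)).
  { apply Rmult_le_compat_l; [apply pow_le; lra|]. generalize (Rle_abs M). lra. }
  generalize (Hrem n). lra.
Qed.

Fixpoint prepend (b : bool) (j : nat) (z : Sigma) : Sigma :=
  match j with O => z | S j' => cons_sym b (prepend b j' z) end.

Lemma prepend_spec b j z i : prepend b j z i = if Nat.ltb i j then b else z (i - j)%nat.
Proof.
  revert i; induction j as [|j IH]; intros i.
  - simpl. rewrite Nat.sub_0_r. reflexivity.
  - simpl. unfold cons_sym. destruct i; [reflexivity|]. rewrite IH. reflexivity.
Qed.

Definition switch_cyl (b : bool) (y : Sigma) : Prop := y 0%nat = b /\ y 1%nat = negb b.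

Lemma switch_cyl_next b j z :
  switch_cyl b z -> switch_cyl (negb b) (cons_sym (negb b) (prepend b j z)).
Proof.
  intros [Hz0 Hz1]. split; [reflexivity|]. rewrite Bool.negb_involutive.
  simpl. rewrite prepend_spec. destruct j; simpl; auto.
Qed.

Lemma ratio_eq_1_of_self_bounds {T : Type} (P : T -> Prop) (f : T -> R) (r m M : R) :
  (exists y, P y) -> 0 < m -> (forall y, P y -> m <= f y <= M) ->
  (forall B y, (forall y', P y' -> f y' <= B) -> P y -> f y <= r * B) ->
  (forall A y, (forall y', P y' -> A <= f y') -> P y -> r * A <= f y) -> r = 1.
Proof.
  intros [y0 Hy0] Hm Hbd Hup Hlo.
  destruct (completeness (fun v => exists y, P y /\ v = f y)) as [sup [HS1 HS2]].
  { exists M. intros v [y [Hy ->]]. apply Hbd; auto. }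
  { exists (f y0), y0. auto. }
  destruct (completeness (fun v => exists y, P y /\ v = - f y)) as [ninf [HI1 HI2]].
  { exists (- m). intros v [y [Hy ->]]. generalize (Hbd y Hy). lra. }
  { exists (- f y0), y0. auto. }
  assert (HfS : forall y, P y -> f y <= sup) by (intros y Hy; apply HS1; eauto).
  assert (HfI : forall y, P y -> - ninf <= f y).
  { intros y Hy. assert (- f y <= ninf) by (apply HI1; eauto). lra. }
  assert (HS : sup <= r * sup) by (apply HS2; intros v [y [Hy ->]]; apply Hup; auto).
  assert (HI : r * - ninf <= - ninf).
  { assert (ninf <= - (r * - ninf)); [|lra].
    apply HI2. intros v [y [Hy ->]]. generalize (Hlo (- ninf) y HfI Hy). lra. }
  generalize (Hbd y0 Hy0) (HfS y0 Hy0) (HfI y0 Hy0). intros Hy0m Hy0S Hy0I.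
  assert (1 <= r) by (apply (Rmult_le_reg_r sup); lra).
  assert (ninf <= - m) by (apply HI2; intros v [y [Hy ->]]; generalize (Hbd y Hy); lra).
  assert (r <= 1) by (apply (Rmult_le_reg_r (- ninf)); lra).
  lra.
Qed.

Section Eigenfunction.
Variables (H : Sigma -> R) (Hrun : bool -> nat -> R) (beta lam : R) (Phi : Sigma -> R).
Hypothesis H_flat : forall x, x 0%nat = x 1%nat -> H x = 0.
Hypothesis H_run : forall b n, (1 <= n)%nat ->
  forall x, x 0%nat = negb b -> (forall i, (1 <= i <= n)%nat -> x i = b) ->
            x (S n) = negb b -> H x = Hrun b n.
Hypothesis Hrun_nonneg : forall b n, 0 <= beta * Hrun b (S n).
Hypothesis Phi_cont : continuous_Sigma Phi.
Hypothesis Phi_pos : forall x, 0 < Phi x.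
Hypothesis Phi_eig : forall x, transfer H beta Phi x = lam * Phi x.

(* At the fixed point 000..., where H vanishes, the eigen equation reads
   lam Phi(0^oo) = Phi(0^oo) + (a positive term). *)
Lemma eigenvalue_gt_1 : 1 < lam.
Proof.
  set (x0 := fun _ : nat => false).
  assert (E : cons_sym false x0 = x0) by (apply functional_extensionality; intros [|i]; reflexivity).
  generalize (Phi_eig x0). unfold transfer. rewrite E, (H_flat x0) by reflexivity.
  rewrite Rmult_0_r, exp_0, Rmult_1_l. intros Heq.
  assert (0 < exp (- beta * H (cons_sym true x0)) * Phi (cons_sym true x0))
    by (apply Rmult_lt_0_compat; [apply exp_pos|apply Phi_pos]).
  generalize (Phi_pos x0). nra.
Qed.

Lemma H_prepend b j z :
  switch_cyl b z -> H (cons_sym (negb b) (prepend b j z)) = Hrun b (S j).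
Proof.
  intros [Hz0 Hz1]. apply H_run; [lia|reflexivity| |].
  - intros i Hi. destruct i as [|i]; [lia|]. simpl. rewrite prepend_spec.
    destruct (Nat.ltb_spec i j); auto. replace (i - j)%nat with 0%nat by lia. auto.
  - simpl. rewrite prepend_spec. destruct (Nat.ltb_spec (S j) j); [lia|].
    replace (S j - j)%nat with 1%nat by lia. auto.
Qed.

Lemma eigen_step b j z :
  switch_cyl b z ->
  lam * Phi (prepend b j z) =
  exp (- beta * Hrun b (S j)) * Phi (cons_sym (negb b) (prepend b j z)) + Phi (prepend b (S j) z).
Proof.
  intros Hz. rewrite <- Phi_eig, <- (H_prepend b j z Hz). unfold transfer.
  assert (Hflat : H (cons_sym b (prepend b j z)) = 0).
  { apply H_flat. simpl. rewrite prepend_spec. destruct Hz as [Hz0 _].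
    destruct j; simpl; auto. }
  destruct b; simpl; rewrite Hflat, Rmult_0_r, exp_0; ring.
Qed.

(* Iterating the eigen equation along the run of [b]'s at the head of [z]. *)
Lemma renewal_expansion b z J :
  switch_cyl b z ->
  Phi z = sum_f_R0 (fun j => / lam ^ S j * exp (- beta * Hrun b (S j)) *
                              Phi (cons_sym (negb b) (prepend b j z))) J
          + / lam ^ S J * Phi (prepend b (S J) z).
Proof.
  intros Hz. assert (Hl := eigenvalue_gt_1).
  assert (Hpow : forall n, lam ^ n <> 0) by (intros n; apply pow_nonzero; lra).
  induction J as [|J IH].
  - generalize (eigen_step b 0 z Hz). simpl. intros Hstep.
    apply (Rmult_eq_reg_l lam); [|lra]. rewrite Hstep. field. lra.
  - rewrite tech5, IH. generalize (eigen_step b (S J) z Hz). intros Hstep.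
    replace (Phi (prepend b (S J) z)) with (/ lam * (lam * Phi (prepend b (S J) z))) by (field; lra).
    rewrite Hstep. simpl pow. field. split; auto; lra.
Qed.

Lemma renewal_sum b z :
  switch_cyl b z ->
  infinite_sum (fun j => / lam ^ S j * exp (- beta * Hrun b (S j)) *
                         Phi (cons_sym (negb b) (prepend b j z))) (Phi z).
Proof.
  intros Hz. assert (Hl := eigenvalue_gt_1).
  destruct (continuous_bounded_above Phi Phi_cont) as [M HM].
  apply (infinite_sum_of_geometric_remainder _ _ (/ lam) M).
  - split; [left; apply Rinv_0_lt_compat; lra|]. rewrite <- Rinv_1. apply Rinv_lt_contravar; lra.
  - intros J. rewrite (renewal_expansion b z J Hz) at 1. rewrite pow_inv.
    set (s := sum_f_R0 _ J). replace (s + _ - s) with (/ lam ^ S J * Phi (prepend b (S J) z)) by ring.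
    assert (0 < / lam ^ S J) by (apply Rinv_0_lt_compat, pow_lt; lra).
    rewrite Rabs_pos_eq by (generalize (Phi_pos (prepend b (S J) z)); nra).
    apply Rmult_le_compat_l; auto. lra.
Qed.

Lemma renewal_upper b z B :
  switch_cyl b z -> (forall y, switch_cyl (negb b) y -> Phi y <= B) ->
  Phi z <= Fbeta (Hrun b) beta lam * B.
Proof.
  intros Hz HB. assert (Hl := eigenvalue_gt_1).
  destruct (Fbeta_sum (Hrun b) beta lam Hl (Hrun_nonneg b)) as [HF _].
  refine (infinite_sum_le _ _ _ _ _ (renewal_sum b z Hz) (infinite_sum_scal _ _ B HF)).
  intros j. cbv beta. apply Rmult_le_compat_l; [|apply HB, switch_cyl_next; auto].
  apply Rmult_le_pos; [left; apply Rinv_0_lt_compat, pow_lt; lra|left; apply exp_pos].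
Qed.

Lemma renewal_lower b z A :
  switch_cyl b z -> (forall y, switch_cyl (negb b) y -> A <= Phi y) ->
  Fbeta (Hrun b) beta lam * A <= Phi z.
Proof.
  intros Hz HA. assert (Hl := eigenvalue_gt_1).
  destruct (Fbeta_sum (Hrun b) beta lam Hl (Hrun_nonneg b)) as [HF _].
  refine (infinite_sum_le _ _ _ _ _ (infinite_sum_scal _ _ A HF) (renewal_sum b z Hz)).
  intros j. cbv beta. apply Rmult_le_compat_l; [|apply HA, switch_cyl_next; auto].
  apply Rmult_le_pos; [left; apply Rinv_0_lt_compat, pow_lt; lra|left; apply exp_pos].
Qed.

(* Two renewal steps lead from [[10]] back to [[10]]; comparing the supremum and the
   infimum of Phi on [[10]] with themselves forces F^0 F^1 = 1. *)
Lemma Fbeta_product_eq_1 : Fbeta (Hrun true) beta lam * Fbeta (Hrun false) beta lam = 1.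
Proof.
  destruct (continuous_bounded_above Phi Phi_cont) as [M HM].
  destruct (continuous_pos_bounded_below Phi Phi_cont Phi_pos) as [m [Hm0 Hm]].
  apply (ratio_eq_1_of_self_bounds (switch_cyl true) Phi _ m M).
  - exists (fun i => match i with O => true | _ => false end). split; reflexivity.
  - exact Hm0.
  - intros y _. auto.
  - intros B y HB Hy. rewrite Rmult_assoc. apply (renewal_upper true); auto.
    intros y' Hy'. apply (renewal_upper false); auto.
  - intros A y HA Hy. rewrite Rmult_assoc. apply (renewal_lower true); auto.
    intros y' Hy'. apply (renewal_lower false); auto.
Qed.

End Eigenfunction.

(** * Weighted series *)

Lemma sum_below_le K c N :
  0 <= c -> sum_f_R0 (fun n => if Nat.ltb (S n) K then c else 0) N <= INR K * c.
Proof.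
  intros Hc.
  assert (Hcount : sum_f_R0 (fun n => if Nat.ltb (S n) K then c else 0) N = INR (Nat.min (S N) (K - 1)) * c).
  { induction N as [|N IH]; simpl sum_f_R0.
    - destruct (Nat.ltb_spec 1 K); [replace (Nat.min 1 (K - 1)) with 1%nat by lia
                                    |replace (Nat.min 1 (K - 1)) with 0%nat by lia]; simpl; ring.
    - rewrite IH. destruct (Nat.ltb_spec (S (S N)) K).
      + replace (Nat.min (S (S N)) (K - 1)) with (S (Nat.min (S N) (K - 1))) by lia.
        rewrite S_INR. ring.
      + replace (Nat.min (S (S N)) (K - 1)) with (Nat.min (S N) (K - 1)) by lia. ring. }
  rewrite Hcount. apply Rmult_le_compat_r; auto. apply le_INR. lia.
Qed.

Lemma inv_pow_ge_half lam n : 1 < lam <= 2 -> (/ 2) ^ n <= / lam ^ n.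
Proof.
  intros Hl. rewrite <- pow_inv. apply pow_incr. split; [lra|].
  apply Rinv_le_contravar; lra.
Qed.

Definition wterm (w Hc : nat -> R) (beta lam : R) (n : nat) : R :=
  w (S n) * / lam ^ S n * exp (- beta * Hc (S n)).

Definition wseries (w Hc : nat -> R) (beta lam : R) : R := series (wterm w Hc beta lam).

Lemma Fbeta_wseries Hc beta lam : Fbeta Hc beta lam = wseries (fun _ => 1) Hc beta lam.
Proof. unfold Fbeta, wseries, wterm. f_equal. apply functional_extensionality. intros n. ring. Qed.

Section WeightedSeries.
Variables (w : nat -> R) (G : R -> R) (Hc : nat -> R) (Hinf Hmin : R).
Hypothesis w_mono : forall m n, (m <= n)%nat -> w m <= w n.
Hypothesis w_ge_1 : forall n, 1 <= w (S n).
Hypothesis G_sum : forall lam, 1 < lam -> infinite_sum (fun n => w (S n) * / lam ^ S n) (G lam).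
Hypothesis Hc_pos : forall n, (1 <= n)%nat -> 0 < Hc n.
Hypothesis Hc_cv : Un_cv Hc Hinf.
Hypothesis Hc_inf : is_inf_from1 Hc Hmin.

Lemma Hc_near_limit e : 0 < e -> exists K, forall n, (K <= n)%nat -> Hinf - e < Hc n < Hinf + e.
Proof.
  intros He. destruct (Hc_cv e He) as [K HK]. exists K. intros n Hn.
  specialize (HK n Hn). unfold Rdist in HK. apply Rabs_def2 in HK. lra.
Qed.

Lemma Hc_near_min e : 0 < e -> exists k, Hc (S k) <= Hmin + e.
Proof.
  intros He. apply NNPP; intros Hno.
  assert (Hmin + e <= Hmin); [|lra].
  apply (proj2 Hc_inf). intros n Hn. destruct n as [|k]; [lia|].
  apply Rnot_lt_le. intros Hlt. apply Hno. exists k. lra.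
Qed.

Lemma wterm_weight_bound beta lam n :
  0 < beta -> 0 < lam -> 0 <= wterm w Hc beta lam n <= w (S n) * / lam ^ S n.
Proof.
  intros Hb Hl. unfold wterm.
  assert (0 < w (S n) * / lam ^ S n).
  { apply Rmult_lt_0_compat; [generalize (w_ge_1 n); lra|apply Rinv_0_lt_compat, pow_lt; auto]. }
  assert (exp (- beta * Hc (S n)) <= 1).
  { rewrite <- exp_0. apply exp_le_mono. generalize (Hc_pos (S n) ltac:(lia)). nra. }
  generalize (exp_pos (- beta * Hc (S n))). split; nra.
Qed.

Lemma wseries_sum beta lam :
  0 < beta -> 1 < lam -> infinite_sum (wterm w Hc beta lam) (wseries w Hc beta lam).
Proof.
  intros Hb Hl. apply (summable_of_le _ (fun n => w (S n) * / lam ^ S n) (G lam)); auto.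
  intros n. apply wterm_weight_bound; lra.
Qed.

(* Below the index where [Hc] is near its limit, bound [Hc] by [Hmin]; above it, by
   [Hinf - e]. *)
Lemma wseries_upper e :
  0 < e -> exists K, 0 <= K /\ forall beta lam, 0 < beta -> 1 < lam ->
  wseries w Hc beta lam <= K * exp (- beta * Hmin) + exp (- beta * (Hinf - e)) * G lam.
Proof.
  intros He. destruct (Hc_near_limit e He) as [N HN].
  exists (INR N * w (S N)). split; [apply Rmult_le_pos; [apply pos_INR|generalize (w_ge_1 N); lra]|].
  intros beta lam Hb Hl.
  apply (sum_le_of_partial_le _ _ _ (wseries_sum beta lam Hb Hl)). intros M.
  set (low := fun n => if Nat.ltb (S n) N then w (S N) * exp (- beta * Hmin) else 0).
  set (high := fun n => exp (- beta * (Hinf - e)) * (w (S n) * / lam ^ S n)).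
  apply Rle_trans with (sum_f_R0 (fun n => low n + high n) M).
  - apply sum_Rle. intros n _. destruct (wterm_weight_bound beta lam n Hb ltac:(lra)) as [_ Hw].
    assert (Hw0 : 0 < w (S n) * / lam ^ S n).
    { apply Rmult_lt_0_compat; [generalize (w_ge_1 n); lra|apply Rinv_0_lt_compat, pow_lt; lra]. }
    assert (Hhigh : 0 <= high n) by (left; apply Rmult_lt_0_compat; auto; apply exp_pos).
    unfold low, wterm. destruct (Nat.ltb_spec (S n) N).
    + assert (w (S n) * / lam ^ S n <= w (S N)).
      { rewrite <- (Rmult_1_r (w (S N))). apply Rmult_le_compat.
        - generalize (w_ge_1 n). lra.
        - left; apply Rinv_0_lt_compat, pow_lt; lra.
        - apply w_mono. lia.
        - rewrite <- Rinv_1. apply Rinv_le_contravar; [lra|]. apply pow_R1_Rle. lra. }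
      assert (exp (- beta * Hc (S n)) <= exp (- beta * Hmin)).
      { apply exp_scale_le; [lra|]. apply (proj1 Hc_inf). lia. }
      assert (w (S n) * / lam ^ S n * exp (- beta * Hc (S n)) <= w (S N) * exp (- beta * Hmin))
        by (apply Rmult_le_compat; auto; [lra|left; apply exp_pos]).
      lra.
    + unfold high. rewrite Rplus_0_l, Rmult_comm. apply Rmult_le_compat_r; [lra|].
      apply exp_scale_le; [lra|]. generalize (HN (S n) ltac:(lia)). lra.
  - rewrite plus_sum. apply Rplus_le_compat.
    + rewrite Rmult_assoc. apply sum_below_le. apply Rmult_le_pos; [generalize (w_ge_1 N); lra|left; apply exp_pos].
    + replace (sum_f_R0 high M) with (exp (- beta * (Hinf - e)) * sum_f_R0 (fun n => w (S n) * / lam ^ S n) M)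
        by (rewrite scal_sum; apply sum_eq; intros; unfold high; ring).
      apply Rmult_le_compat_l; [left; apply exp_pos|].
      apply partial_sum_le; [|apply G_sum; auto].
      intros n. apply Rmult_le_pos; [generalize (w_ge_1 n); lra|left; apply Rinv_0_lt_compat, pow_lt; lra].
Qed.

Lemma wseries_lower_min e :
  0 < e -> exists c, 0 < c /\ forall beta lam, 0 < beta -> 1 < lam <= 2 ->
  c * exp (- beta * (Hmin + e)) <= wseries w Hc beta lam.
Proof.
  intros He. destruct (Hc_near_min e He) as [k Hk].
  exists ((/ 2) ^ S k). split; [apply pow_lt; lra|]. intros beta lam Hb Hl.
  eapply Rle_trans; [|apply (term_le_series (wterm w Hc beta lam) _ k); [|apply wseries_sum; lra]].
  - unfold wterm. rewrite <- (Rmult_1_l ((/ 2) ^ S k)).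
    apply Rmult_le_compat; [apply Rmult_le_pos; [lra|apply pow_le; lra]|left; apply exp_pos| |].
    + apply Rmult_le_compat; [lra|apply pow_le; lra|apply w_ge_1|apply inv_pow_ge_half; auto].
    + apply exp_scale_le; lra.
  - intros n. apply wterm_weight_bound; lra.
Qed.

(* Monotonicity of the weight lets the tail of the series beyond index [K] dominate
   [lam^-K] times the whole weighted geometric series [G lam]. *)
Lemma wseries_lower_tail e :
  0 < e -> exists c, 0 < c /\ forall beta lam, 0 < beta -> 1 < lam <= 2 ->
  c * exp (- beta * (Hinf + e)) * G lam <= wseries w Hc beta lam.
Proof.
  intros He. destruct (Hc_near_limit e He) as [K HK].
  exists ((/ 2) ^ K). split; [apply pow_lt; lra|]. intros beta lam Hb Hl.
  set (a := (/ 2) ^ K * exp (- beta * (Hinf + e))).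
  assert (Hterm : forall n, 0 <= wterm w Hc beta lam n) by (intros n; apply wterm_weight_bound; lra).
  rewrite Rmult_comm. apply (sum_le_of_partial_le _ _ _ (infinite_sum_scal _ _ a (G_sum lam ltac:(lra)))).
  intros N. eapply Rle_trans; [|apply (partial_sum_le (wterm w Hc beta lam) _ (N + K)); [auto|apply wseries_sum; lra]].
  eapply Rle_trans; [|apply sum_shift_le; auto].
  apply sum_Rle. intros n _. unfold wterm, a.
  replace (S (n + K)) with (S n + K)%nat by lia. rewrite pow_add, Rinv_mult.
  replace (w (S n) * / lam ^ S n * ((/ 2) ^ K * exp (- beta * (Hinf + e))))
    with (w (S n) * (/ lam ^ S n * (/ 2) ^ K) * exp (- beta * (Hinf + e))) by ring.
  assert (0 < / lam ^ S n) by (apply Rinv_0_lt_compat, pow_lt; lra).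
  assert (0 < (/ 2) ^ K) by (apply pow_lt; lra).
  apply Rmult_le_compat.
  - apply Rmult_le_pos; [generalize (w_ge_1 n); lra|]. left; apply Rmult_lt_0_compat; auto.
  - left; apply exp_pos.
  - apply Rmult_le_compat; [generalize (w_ge_1 n); lra|left; apply Rmult_lt_0_compat; auto| |].
    + apply w_mono. lia.
    + apply Rmult_le_compat_l; [lra|]. apply inv_pow_ge_half; auto.
  - apply exp_scale_le; [lra|]. generalize (HK (S n + K)%nat ltac:(lia)). lra.
Qed.

Lemma wseries_two_scale_bounds (lam : R -> R) :
  (forall beta, 0 < beta -> 1 < lam beta <= 2) ->
  two_scale_bounds (fun beta => wseries w Hc beta (lam beta)) (fun beta => G (lam beta)) Hmin Hinf.
Proof.
  intros Hlam e He.
  destruct (wseries_upper e He) as [K [HK Hup]].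
  destruct (wseries_lower_min e He) as [ca [Hca Hlo1]].
  destruct (wseries_lower_tail e He) as [cb [Hcb Hlo2]].
  exists K, ca, cb. do 3 (split; auto). intros beta Hb.
  destruct (Hlam beta Hb) as [Hl1 Hl2].
  split; [apply Hup|split; [apply Hlo1|apply Hlo2]]; auto.
Qed.

End WeightedSeries.

(** * Asymptotics of the eigenvalue *)

Lemma puiseux_gamma_cases a0 a1 m0 m1 :
  let g := puiseux_gamma a0 a1 m0 m1 in
  g <= (a1 + a0) / 2 /\ g <= m0 + a1 /\ g <= m1 + a0 /\
  (g = (a1 + a0) / 2 \/ g = m0 + a1 \/ g = m1 + a0).
Proof. unfold puiseux_gamma, Rmin. repeat destruct Rle_dec; lra. Qed.

Lemma Hmin_nonneg Hc Hmin : (forall n, (1 <= n)%nat -> 0 < Hc n) -> is_inf_from1 Hc Hmin -> 0 <= Hmin.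
Proof. intros Hpos Hinf_. apply (proj2 Hinf_). intros n Hn. left. auto. Qed.

(* The infimum of a positive sequence is either attained or equal to its limit. *)
Lemma inf_zero_limit_zero (Hc : nat -> R) Hinf :
  (forall n, (1 <= n)%nat -> 0 < Hc n) -> Un_cv Hc Hinf -> is_inf_from1 Hc 0 -> Hinf = 0.
Proof.
  intros Hp Hcv Hi.
  assert (Hge : 0 <= Hinf).
  { apply Rnot_lt_le; intros Hlt. destruct (Hcv (- Hinf)) as [N HN]; [lra|].
    specialize (HN (S N) ltac:(lia)). unfold Rdist in HN. apply Rabs_def2 in HN.
    generalize (Hp (S N) ltac:(lia)). lra. }
  assert (Hfin : forall K, exists m, 0 < m /\ forall n, (1 <= n <= K)%nat -> m <= Hc n).
  { induction K as [|K [m [Hm HmK]]].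
    - exists 1. split; [lra|]. intros; lia.
    - exists (Rmin m (Hc (S K))). split; [apply Rmin_pos; auto; apply Hp; lia|].
      intros n Hn. destruct (Nat.eq_dec n (S K)) as [->|Hne]; [apply Rmin_r|].
      eapply Rle_trans; [apply Rmin_l|]. apply HmK; lia. }
  destruct Hge as [Hpos|]; auto. exfalso.
  destruct (Hcv (Hinf / 2)) as [N HN]; [lra|]. destruct (Hfin N) as [m [Hm HmN]].
  assert (Hlb : Rmin m (Hinf / 2) <= 0).
  { apply (proj2 Hi). intros n Hn. destruct (Nat.le_gt_cases n N).
    - eapply Rle_trans; [apply Rmin_l|]. apply HmN; lia.
    - specialize (HN n ltac:(lia)). unfold Rdist in HN. apply Rabs_def2 in HN.
      eapply Rle_trans; [apply Rmin_r|]. lra. }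
  assert (0 < Rmin m (Hinf / 2)) by (apply Rmin_pos; lra). lra.
Qed.

(* From [1 <= (K0 a0 + b0/d) (K1 a1 + b1/d)] with a negligible constant term,
   either the linear or the quadratic term in [1/d] is at least a fixed fraction. *)
Lemma quadratic_ge_1_bound K0 K1 a0 a1 b0 b1 D r :
  0 <= K0 -> 0 <= K1 -> 0 <= a0 -> 0 <= a1 -> 0 <= b0 -> 0 <= b1 -> 0 < D -> 0 < r ->
  K0 * K1 * (a0 * a1) <= / 2 -> a0 * b1 <= D -> b0 * a1 <= D -> b0 * b1 <= D * D ->
  1 <= (K0 * a0 + b0 * r) * (K1 * a1 + b1 * r) -> 1 <= 4 * ((K0 + K1 + 1) * D * r).
Proof.
  intros HK0 HK1 Ha0 Ha1 Hb0 Hb1 HD Hr Hconst Hab Hba Hbb Hprod.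
  set (v := (K0 + K1 + 1) * D * r).
  assert (HDr : 0 < D * r) by (apply Rmult_lt_0_compat; auto).
  assert (Hv : D * r <= v) by (unfold v; rewrite Rmult_assoc; nra).
  assert (Hlin : (K0 * (a0 * b1) + K1 * (b0 * a1)) * r <= v).
  { apply Rle_trans with ((K0 + K1) * D * r); [|unfold v; nra].
    apply Rmult_le_compat_r; [lra|].
    assert (K0 * (a0 * b1) <= K0 * D) by (apply Rmult_le_compat_l; auto).
    assert (K1 * (b0 * a1) <= K1 * D) by (apply Rmult_le_compat_l; auto). lra. }
  assert (Hquad : b0 * b1 * (r * r) <= v * v).
  { apply Rle_trans with ((D * r) * (D * r)).
    - replace (D * r * (D * r)) with (D * D * (r * r)) by ring.
      apply Rmult_le_compat_r; [nra|auto].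
    - apply Rmult_le_compat; lra. }
  replace ((K0 * a0 + b0 * r) * (K1 * a1 + b1 * r))
    with (K0 * K1 * (a0 * a1) + (K0 * (a0 * b1) + K1 * (b0 * a1)) * r + b0 * b1 * (r * r))
    in Hprod by ring.
  nra.
Qed.

Lemma square_lower_bound c k E d :
  0 < c <= 1 -> c <= k -> 0 < E -> 0 < d -> k * (E * E) <= d * d -> c * E <= d.
Proof.
  intros Hc Hck HE Hd Hk. apply Rnot_lt_le. intros Hlt.
  assert (d * d < c * E * (c * E)) by (apply Rmult_le_0_lt_compat; lra).
  assert (c * c <= k) by nra. nra.
Qed.

Lemma le_of_mul_inv_le_1 x k : 0 < k -> x * / k <= 1 -> x <= k.
Proof.
  intros Hk Hx. apply (Rmult_le_compat_r k) in Hx; [|lra].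
  replace (x * / k * k) with x in Hx by (field; lra). lra.
Qed.

Lemma product_le_1 x y F0 F1 : 0 <= x <= F0 -> 0 <= y <= F1 -> F0 * F1 = 1 -> x * y <= 1.
Proof. intros Hx Hy Hp. rewrite <- Hp. apply Rmult_le_compat; lra. Qed.

Section DoubleWell.
Variables (H : Sigma -> R) (H0 H1 : nat -> R) (Hinf0 Hinf1 Hmin0 Hmin1 : R) (lam : R -> R).
Hypothesis H_dw : reduced_double_well H H0 H1.
Hypothesis H0_cv : Un_cv H0 Hinf0.
Hypothesis H1_cv : Un_cv H1 Hinf1.
Hypothesis H0_inf : is_inf_from1 H0 Hmin0.
Hypothesis H1_inf : is_inf_from1 H1 Hmin1.
Hypothesis lam_eig : forall beta, 0 < beta -> is_pos_cont_eigenvalue H beta (lam beta).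

Local Notation gamma := (puiseux_gamma Hinf0 Hinf1 Hmin0 Hmin1).

Lemma H0_pos n : (1 <= n)%nat -> 0 < H0 n.
Proof. destruct H_dw as (_ & _ & _ & _ & Hr0 & _). intros Hn. apply (Hr0 n Hn). Qed.

Lemma H1_pos n : (1 <= n)%nat -> 0 < H1 n.
Proof. destruct H_dw as (_ & _ & _ & _ & _ & Hr1 & _). intros Hn. apply (Hr1 n Hn). Qed.

Lemma eigenvalue_facts beta :
  0 < beta -> 1 < lam beta <= 2 /\ Fbeta H0 beta (lam beta) * Fbeta H1 beta (lam beta) = 1.
Proof.
  intros Hb. destruct (lam_eig beta Hb) as [Phi [Hcont [Hpos Heig]]].
  destruct H_dw as (_ & _ & _ & Hflat & Hr0 & Hr1 & _).
  set (Hrun := fun b : bool => if b then H0 else H1).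
  assert (Hrun_ok : forall b n, (1 <= n)%nat -> forall x, x 0%nat = negb b ->
            (forall i, (1 <= i <= n)%nat -> x i = b) -> x (S n) = negb b -> H x = Hrun b n).
  { intros [|] n Hn; [apply (Hr0 n Hn)|apply (Hr1 n Hn)]. }
  assert (Hrun_nonneg : forall b n, 0 <= beta * Hrun b (S n)).
  { intros [|] n; simpl; [generalize (H0_pos (S n) ltac:(lia))|generalize (H1_pos (S n) ltac:(lia))];
      intros; nra. }
  assert (Hl : 1 < lam beta) by exact (eigenvalue_gt_1 H beta (lam beta) Phi Hflat Hpos Heig).
  assert (Hprod : Fbeta H0 beta (lam beta) * Fbeta H1 beta (lam beta) = 1)
    by exact (Fbeta_product_eq_1 H Hrun beta (lam beta) Phi Hflat Hrun_ok Hrun_nonneg Hcont Hpos Heig).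
  split; [split; auto|auto].
  destruct (Fbeta_sum H0 beta (lam beta) Hl (Hrun_nonneg true)) as [_ HF0].
  destruct (Fbeta_sum H1 beta (lam beta) Hl (Hrun_nonneg false)) as [_ HF1].
  apply Rnot_lt_le. intros Hgt.
  assert (/ (lam beta - 1) < 1) by (rewrite <- Rinv_1; apply Rinv_lt_contravar; lra).
  assert (Fbeta H0 beta (lam beta) * Fbeta H1 beta (lam beta) < 1 * 1)
    by (apply Rmult_le_0_lt_compat; lra).
  lra.
Qed.

Lemma lam_range beta : 0 < beta -> 1 < lam beta <= 2.
Proof. intros Hb. apply (eigenvalue_facts beta Hb). Qed.

Lemma Fbeta_two_scale_bounds Hc Hinf Hmin :
  (forall n, (1 <= n)%nat -> 0 < Hc n) -> Un_cv Hc Hinf -> is_inf_from1 Hc Hmin ->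
  two_scale_bounds (fun beta => Fbeta Hc beta (lam beta)) (fun beta => / (lam beta - 1)) Hmin Hinf.
Proof.
  intros Hpos Hcv Hinf_. replace (fun beta => Fbeta Hc beta (lam beta))
    with (fun beta => wseries (fun _ => 1) Hc beta (lam beta))
    by (apply functional_extensionality; intros beta; symmetry; apply Fbeta_wseries).
  apply (wseries_two_scale_bounds (fun _ => 1) (fun l => / (l - 1))); auto.
  - intros; lra.
  - intros; lra.
  - intros l Hl. apply (infinite_sum_ext (fun n => / l ^ S n)); [intros n; ring|].
    apply geometric_series; auto.
  - exact lam_range.
Qed.

Lemma Ftilde_two_scale_bounds Hc Hinf Hmin :
  (forall n, (1 <= n)%nat -> 0 < Hc n) -> Un_cv Hc Hinf -> is_inf_from1 Hc Hmin ->
  two_scale_bounds (fun beta => Ftilde Hc beta (lam beta))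
                   (fun beta => lam beta / ((lam beta - 1) * (lam beta - 1))) Hmin Hinf.
Proof.
  intros Hpos Hcv Hinf_.
  change (fun beta => Ftilde Hc beta (lam beta)) with (fun beta => wseries INR Hc beta (lam beta)).
  apply (wseries_two_scale_bounds INR (fun l => l / ((l - 1) * (l - 1)))); auto.
  - intros m n Hmn. apply le_INR. auto.
  - intros n. rewrite S_INR. generalize (pos_INR n). lra.
  - exact weighted_geometric_series.
  - exact lam_range.
Qed.

(* [F^0 F^1 = 1] against the lower bounds, one bound for each expression in [gamma]. *)
Lemma lam_sub1_lower_bounds e :
  0 < e -> exists c, 0 < c /\ forall beta, 0 < beta ->
  c * exp (- beta * ((Hinf1 + Hinf0) / 2 + e)) <= lam beta - 1 /\
  c * exp (- beta * (Hmin0 + Hinf1 + e)) <= lam beta - 1 /\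
  c * exp (- beta * (Hmin1 + Hinf0 + e)) <= lam beta - 1.
Proof.
  intros He. set (e' := e / 2). assert (He' : 0 < e') by (unfold e'; lra).
  destruct (Fbeta_two_scale_bounds H0 Hinf0 Hmin0 H0_pos H0_cv H0_inf e' He')
    as [K0 [ca0 [cb0 [_ [Hca0 [Hcb0 HF0]]]]]].
  destruct (Fbeta_two_scale_bounds H1 Hinf1 Hmin1 H1_pos H1_cv H1_inf e' He')
    as [K1 [ca1 [cb1 [_ [Hca1 [Hcb1 HF1]]]]]].
  set (c := Rmin (Rmin (cb0 * cb1) 1) (Rmin (ca0 * cb1) (cb0 * ca1))).
  assert (Hc0 : 0 < c) by (repeat apply Rmin_pos; try apply Rmult_lt_0_compat; lra).
  assert (Hcs : c <= cb0 * cb1 /\ c <= 1 /\ c <= ca0 * cb1 /\ c <= cb0 * ca1).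
  { unfold c. repeat split; unfold Rmin; repeat destruct Rle_dec; lra. }
  exists c. split; auto. intros beta Hb.
  destruct (eigenvalue_facts beta Hb) as [Hl Hprod]. set (d := lam beta - 1) in *.
  destruct (HF0 beta Hb) as [_ [La0 Lb0]]. destruct (HF1 beta Hb) as [_ [La1 Lb1]].
  assert (Hd : 0 < d) by (unfold d; lra).
  assert (Ha : forall k a, 0 < k -> 0 <= k * exp (- beta * a))
    by (intros k a Hk; left; apply Rmult_lt_0_compat; auto; apply exp_pos).
  assert (Hb' : forall k a, 0 < k -> 0 <= k * exp (- beta * a) * / d)
    by (intros k a Hk; apply Rmult_le_pos; auto; left; apply Rinv_0_lt_compat; auto).
  assert (Hb0 : 0 <= beta) by lra.
  split; [|split].
  - assert (Hxy := product_le_1 _ _ _ _ (conj (Hb' _ _ Hcb0) Lb0) (conj (Hb' _ _ Hcb1) Lb1) Hprod).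
    set (E := exp (- beta * ((Hinf1 + Hinf0) / 2 + e'))).
    assert (HE : cb0 * cb1 * (E * E) <= d * d).
    { apply le_of_mul_inv_le_1; [apply Rmult_lt_0_compat; auto|].
      replace (E * E) with (exp (- beta * (Hinf0 + e')) * exp (- beta * (Hinf1 + e')))
        by (unfold E; rewrite !exp_scale_plus; f_equal; unfold e'; field).
      rewrite Rinv_mult. eapply Rle_trans; [|exact Hxy]. apply Req_le. ring. }
    apply Rle_trans with (c * E); [|apply (square_lower_bound c (cb0 * cb1)); try lra; apply exp_pos].
    apply Rmult_le_compat_l; [lra|]. apply exp_scale_le; auto. unfold e'; lra.
  - assert (Hxy := product_le_1 _ _ _ _ (conj (Ha _ _ Hca0) La0) (conj (Hb' _ _ Hcb1) Lb1) Hprod).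
    rewrite <- Rmult_assoc, exp_scale_mult in Hxy. apply le_of_mul_inv_le_1 in Hxy; auto.
    eapply Rle_trans; [|exact Hxy]. apply Rmult_le_compat; [lra|left; apply exp_pos|lra|].
    apply exp_scale_le; auto. unfold e'. lra.
  - assert (Hxy := product_le_1 _ _ _ _ (conj (Hb' _ _ Hcb0) Lb0) (conj (Ha _ _ Hca1) La1) Hprod).
    rewrite Rmult_comm, <- Rmult_assoc, exp_scale_mult in Hxy. apply le_of_mul_inv_le_1 in Hxy; auto.
    eapply Rle_trans; [|exact Hxy]. apply Rmult_le_compat; [lra|left; apply exp_pos|lra|].
    apply exp_scale_le; auto. unfold e'. lra.
Qed.

Lemma lam_sub1_lower e :
  0 < e -> exists c, 0 < c /\ forall beta, 0 < beta -> c * exp (- beta * (gamma + e)) <= lam beta - 1.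
Proof.
  intros He. destruct (lam_sub1_lower_bounds e He) as [c [Hc Hbounds]].
  exists c. split; auto. intros beta Hb. destruct (Hbounds beta Hb) as [B1 [B2 B3]].
  destruct (puiseux_gamma_cases Hinf0 Hinf1 Hmin0 Hmin1) as [_ [_ [_ [Hg|[Hg|Hg]]]]];
    rewrite Hg; auto.
Qed.

(* When [Hmin0 + Hmin1 = 0] all the heights tend to 0, so [gamma = 0] and [lam <= 2]
   suffices. *)
Lemma lam_sub1_upper_degenerate e beta :
  Hmin0 + Hmin1 <= 0 -> 0 < e -> 0 < beta -> lam beta - 1 <= exp (- beta * (gamma - e)).
Proof.
  intros Hs He Hb.
  destruct (puiseux_gamma_cases Hinf0 Hinf1 Hmin0 Hmin1) as [_ [Hg2 _]].
  assert (Hm0 := Hmin_nonneg H0 Hmin0 H0_pos H0_inf).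
  assert (Hm1 := Hmin_nonneg H1 Hmin1 H1_pos H1_inf).
  assert (Hz1 : Hmin1 = 0) by lra. rewrite Hz1 in H1_inf.
  assert (Hi1 := inf_zero_limit_zero H1 Hinf1 H1_pos H1_cv H1_inf).
  destruct (lam_range beta Hb) as [_ Hl2].
  assert (1 <= exp (- beta * (gamma - e))) by (rewrite <- exp_0; apply exp_le_mono; nra).
  lra.
Qed.

(* [F^0 F^1 = 1] against the upper bounds. *)
Lemma lam_sub1_upper e :
  0 < e -> exists Q B, 0 < Q /\ forall beta, B < beta -> lam beta - 1 <= Q * exp (- beta * (gamma - e)).
Proof.
  intros He.
  destruct (Fbeta_two_scale_bounds H0 Hinf0 Hmin0 H0_pos H0_cv H0_inf e He)
    as [K0 [ca0 [cb0 [HK0 [Hca0 [_ HF0]]]]]].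
  destruct (Fbeta_two_scale_bounds H1 Hinf1 Hmin1 H1_pos H1_cv H1_inf e He)
    as [K1 [ca1 [cb1 [HK1 [Hca1 [_ HF1]]]]]].
  destruct (puiseux_gamma_cases Hinf0 Hinf1 Hmin0 Hmin1) as [Hg1 [Hg2 [Hg3 _]]].
  set (Q := 4 * (K0 + K1 + 1)).
  destruct (Rle_lt_dec (Hmin0 + Hmin1) 0) as [Hs|Hs].
  { exists Q, 0. split; [unfold Q; lra|]. intros beta Hb.
    assert (Hdeg := lam_sub1_upper_degenerate e beta Hs He Hb).
    assert (0 < exp (- beta * (gamma - e))) by apply exp_pos. unfold Q. nra. }
  destruct (exp_decay_eventually (K0 * K1) (Hmin0 + Hmin1) Hs) as [B HB].
  exists Q, (Rmax B 0). split; [unfold Q; lra|]. intros beta Hbeta.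
  generalize (Rmax_l B 0) (Rmax_r B 0). intros Hm1 Hm2. assert (Hb : 0 < beta) by lra.
  destruct (eigenvalue_facts beta Hb) as [Hl Hprod].
  destruct (HF0 beta Hb) as [U0 [L0 _]]. destruct (HF1 beta Hb) as [U1 [L1 _]].
  set (d := lam beta - 1) in *. assert (Hd : 0 < d) by (unfold d; lra).
  set (D := exp (- beta * (gamma - e))).
  assert (Hbound : 1 <= 4 * ((K0 + K1 + 1) * D * / d)).
  { apply (quadratic_ge_1_bound K0 K1 (exp (- beta * Hmin0)) (exp (- beta * Hmin1))
             (exp (- beta * (Hinf0 - e))) (exp (- beta * (Hinf1 - e)))); auto;
      try (left; apply exp_pos); try apply exp_pos; try (apply Rinv_0_lt_compat; auto).
    - rewrite exp_scale_plus. apply HB. lra.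
    - rewrite exp_scale_plus. apply exp_scale_le; lra.
    - rewrite exp_scale_plus. apply exp_scale_le; lra.
    - unfold D. rewrite !exp_scale_plus. apply exp_scale_le; lra.
    - rewrite <- Hprod. apply Rmult_le_compat; auto.
      + eapply Rle_trans; [|exact L0]. left. apply Rmult_lt_0_compat; auto. apply exp_pos.
      + eapply Rle_trans; [|exact L1]. left. apply Rmult_lt_0_compat; auto. apply exp_pos. }
  apply (Rmult_le_compat_r d) in Hbound; [|lra].
  replace (4 * ((K0 + K1 + 1) * D * / d) * d) with (Q * D) in Hbound by (unfold Q; field; lra).
  lra.
Qed.

Lemma lam_sub1_exp_rate : exp_rate (fun beta => lam beta - 1) gamma.
Proof.
  intros e He. destruct (lam_sub1_lower e He) as [c [Hc Hlo]].
  destruct (lam_sub1_upper e He) as [Q [B [HQ Hup]]].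
  exists c, Q, (Rmax B 0). split; auto. split; auto. intros beta Hbeta.
  generalize (Rmax_l B 0) (Rmax_r B 0). intros Hm1 Hm2.
  split; [apply Hlo|apply Hup]; lra.
Qed.

Lemma inv_lam_sub1_exp_rate : exp_rate (fun beta => / (lam beta - 1)) (- gamma).
Proof. exact (exp_rate_inv _ _ lam_sub1_exp_rate). Qed.

Lemma weighted_geometric_exp_rate :
  exp_rate (fun beta => lam beta / ((lam beta - 1) * (lam beta - 1))) (- (2 * gamma)).
Proof.
  replace (- (2 * gamma)) with (0 + (- gamma + - gamma)) by ring.
  apply (exp_rate_ext (fun beta => lam beta * (/ (lam beta - 1) * / (lam beta - 1)))).
  { intros beta. unfold Rdiv. rewrite Rinv_mult. reflexivity. }
  apply exp_rate_mult; [|apply exp_rate_mult; apply inv_lam_sub1_exp_rate].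
  apply (exp_rate_bounded _ 1 2); [lra|]. intros beta Hb. generalize (lam_range beta Hb). lra.
Qed.

Lemma Fbeta_exp_rate Hc Hinf Hmin :
  (forall n, (1 <= n)%nat -> 0 < Hc n) -> Un_cv Hc Hinf -> is_inf_from1 Hc Hmin ->
  exp_rate (fun beta => Fbeta Hc beta (lam beta)) (Rmin Hmin (Hinf - gamma)).
Proof.
  intros Hpos Hcv Hinf_.
  exact (exp_rate_sandwich _ _ _ _ _ inv_lam_sub1_exp_rate (Fbeta_two_scale_bounds _ _ _ Hpos Hcv Hinf_)).
Qed.

Lemma Ftilde_exp_rate Hc Hinf Hmin :
  (forall n, (1 <= n)%nat -> 0 < Hc n) -> Un_cv Hc Hinf -> is_inf_from1 Hc Hmin ->
  exp_rate (fun beta => Ftilde Hc beta (lam beta)) (Rmin Hmin (Hinf - 2 * gamma)).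
Proof.
  intros Hpos Hcv Hinf_.
  exact (exp_rate_sandwich _ _ _ _ _ weighted_geometric_exp_rate (Ftilde_two_scale_bounds _ _ _ Hpos Hcv Hinf_)).
Qed.

End DoubleWell.

Theorem proposition3p7
  (H : Sigma -> R) (H0 H1 : nat -> R)
  (Hinf0 Hinf1 Hmin0 Hmin1 : R) (lam : R -> R) :
  reduced_double_well H H0 H1 ->
  Un_cv H0 Hinf0 -> Un_cv H1 Hinf1 ->
  is_inf_from1 H0 Hmin0 -> is_inf_from1 H1 Hmin1 ->
  (forall beta, 0 < beta -> is_pos_cont_eigenvalue H beta (lam beta)) ->
  let gamma := puiseux_gamma Hinf0 Hinf1 Hmin0 Hmin1 in
  cv_at_infty (fun beta => - / beta * ln (lam beta - 1)) gamma /\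
  cv_at_infty (fun beta => - / beta * ln (Fbeta H0 beta (lam beta)))
              (Rmin Hmin0 (Hinf0 - gamma)) /\
  cv_at_infty (fun beta => - / beta * ln (Fbeta H1 beta (lam beta)))
              (Rmin Hmin1 (Hinf1 - gamma)) /\
  cv_at_infty (fun beta => - / beta * ln (Ftilde H0 beta (lam beta)))
              (Rmin Hmin0 (Hinf0 - 2 * gamma)) /\
  cv_at_infty (fun beta => - / beta * ln (Ftilde H1 beta (lam beta)))
              (Rmin Hmin1 (Hinf1 - 2 * gamma)).
Proof.
  intros Hdw Hcv0 Hcv1 Hi0 Hi1 Heig gamma.
  assert (Hp0 := H0_pos H H0 H1 Hdw). assert (Hp1 := H1_pos H H0 H1 Hdw).
  repeat split; apply exp_rate_cv.
  - eapply lam_sub1_exp_rate; eauto.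
  - eapply Fbeta_exp_rate; eauto.
  - eapply Fbeta_exp_rate; eauto.
  - eapply Ftilde_exp_rate; eauto.
  - eapply Ftilde_exp_rate; eauto.
Qed.
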